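(* Let $\Gamma$ be a group, $\alpha\in\mathrm{Aut}(\Gamma)$ and $\omega:\Gamma\times\Gamma\to\Gamma$, $\omega(g,h)=\alpha(g)$. The map $\kappa:\prod_{\mathbb Q_2}\Gamma\to K(\omega)$ sending $f:\mathbb Q_2\to\Gamma$ to the map $\{0,1\}^*\to\Gamma$, $u\mapsto\alpha^{-|u|}(f(u00\cdots))$, is a well-defined isomorphism of groups.
   Context: $\{0,1\}^*$ denotes the finite words over $\{0,1\}$ (including the empty word), $|u|$ the length of $u$; $\mathbb Q_2\subset\{0,1\}^{\mathbb N}$ is the set of eventually-zero sequences, each of the form $u00\cdots$ with $u\in\{0,1\}^*$. $\prod_{\mathbb Q_2}\Gamma$ is the group of all maps $\mathbb Q_2\to\Gamma$ under pointwise product. $K(\omega)$ is the group (pointwise product) of maps $a:\{0,1\}^*\to\Gamma$ with $a(u)=\omega(a(u0),a(u1))$ for all $u$. *)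

From mathcomp Require Import all_boot.
Set Implicit Arguments. Unset Strict Implicit. Unset Printing Implicit Defensive.

Definition is_group (G : Type) (mul : G -> G -> G) (one : G) (inv : G -> G) : Prop :=
  [/\ forall x y z, mul x (mul y z) = mul (mul x y) z,
      forall x, mul one x = x, forall x, mul x one = x,
      forall x, mul (inv x) x = one & forall x, mul x (inv x) = one].

Definition is_automorphism (G : Type) (mul : G -> G -> G) (alpha alphainv : G -> G) : Prop :=
  [/\ forall x y, alpha (mul x y) = mul (alpha x) (alpha y),
      cancel alpha alphainv & cancel alphainv alpha].

(* Q_2 : eventually-zero 0/1 sequences (false = 0, true = 1). *)
Definition eventually_zero (s : nat -> bool) : Prop :=
  exists N, forall n, N <= n -> s n = false.
Definition Q2 := {s : nat -> bool | eventually_zero s}.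

Definition pad (u : seq bool) : nat -> bool := fun n => nth false u n.
Lemma pad_ev (u : seq bool) : eventually_zero (pad u).
Proof. exists (size u) => n Hn; rewrite /pad nth_default //. Qed.
Definition padQ2 (u : seq bool) : Q2 := exist _ (pad u) (pad_ev u).

Definition inK (G : Type) (omega : G -> G -> G) (a : seq bool -> G) : Prop :=
  forall u, a u = omega (a (rcons u false)) (a (rcons u true)).

Definition kappa (G : Type) (alphainv : G -> G) (f : Q2 -> G) : seq bool -> G :=
  fun u => iter (size u) alphainv (f (padQ2 u)).

From mathcomp Require Import all_boot.
From Stdlib Require Import ProofIrrelevance FunctionalExtensionality ClassicalEpsilon.

Set Implicit Arguments.
Unset Strict Implicit.
Unset Printing Implicit Defensive.

(* For omega(g, h) = alpha g the membership condition of K(omega) reads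
   a u = alpha (a (u0)), i.e. u |-> alpha^|u| (a u) is unchanged by appending
   zeros, so it is a function of the point u00... of Q_2; this function is the
   preimage of a under kappa.  Since every point of Q_2 is of the form u00...,
   kappa is injective, and it is multiplicative because alpha^-1 is. *)

Lemma iter_can (T : Type) (f g : T -> T) :
  cancel f g -> forall n, cancel (iter n f) (iter n g).
Proof. by move=> fK; elim=> [|n IHn] x //; rewrite iterSr iterS fK IHn. Qed.

Lemma iter_morph2 (T : Type) (op : T -> T -> T) (h : T -> T) :
  {morph h : x y / op x y} -> forall n, {morph iter n h : x y / op x y}.
Proof. by move=> hM; elim=> [|n IHn] x y //=; rewrite IHn hM. Qed.

Lemma can_morph2 (T : Type) (op : T -> T -> T) (f g : T -> T) :
  {morph f : x y / op x y} -> cancel f g -> cancel g f ->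
  {morph g : x y / op x y}.
Proof. by move=> fM fK gK x y; apply: (can_inj fK); rewrite fM !gK. Qed.

Lemma Q2_inj (x y : Q2) : sval x = sval y -> x = y.
Proof.
by case: x y => [s hs] [t ht] /= eq_st; subst t; rewrite (proof_irrelevance _ hs ht).
Qed.

Lemma padQ2_rcons0 (u : seq bool) : padQ2 (rcons u false) = padQ2 u.
Proof.
apply: Q2_inj; apply: functional_extensionality => n /=.
rewrite /pad nth_rcons; case: ltnP => // le_u_n.
by rewrite nth_default //; case: eqP.
Qed.

Lemma padQ2_surj (x : Q2) : exists u, padQ2 u = x.
Proof.
case: x => s [N s_eq0]; exists (mkseq s N); apply: Q2_inj.
apply: functional_extensionality => n /=; rewrite /pad.
case: (ltnP n N) => [lt_n_N | le_N_n]; first by rewrite nth_mkseq.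
by rewrite nth_default ?size_mkseq // s_eq0.
Qed.

Definition Q2_repr (x : Q2) : seq bool :=
  proj1_sig (constructive_indefinite_description _ (padQ2_surj x)).

Lemma Q2_reprK : cancel Q2_repr padQ2.
Proof. by move=> x; rewrite /Q2_repr; case: constructive_indefinite_description. Qed.

Lemma pad_eq_cat_nseq (u v : seq bool) :
  pad u =1 pad v -> size u <= size v -> v = u ++ nseq (size v - size u) false.
Proof.
move=> eq_uv le_uv; apply: (@eq_from_nth _ false).
  by rewrite size_cat size_nseq subnKC.
move=> n lt_n_v; rewrite -[nth _ v n]eq_uv /pad nth_cat.
by case: ltnP => // le_u_n; rewrite nth_nseq if_same nth_default.
Qed.

Section AppendZeros.

Variables (G : Type) (alpha : G -> G) (a : seq bool -> G).
Hypothesis aK : inK (fun g _ : G => alpha g) a.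

Lemma inK_cat_nseq k u : a u = iter k alpha (a (u ++ nseq k false)).
Proof.
elim: k u => [|k IHk] u /=; first by rewrite cats0.
by rewrite aK IHk -cats1 -catA.
Qed.

Lemma inK_padQ2_invariant u v :
  padQ2 u = padQ2 v -> iter (size u) alpha (a u) = iter (size v) alpha (a v).
Proof.
wlog le_uv : u v / size u <= size v.
  by move=> wlog_uv eq_uv; case: (leqP (size u) (size v)) => [|/ltnW] le;
    [|symmetry]; apply: wlog_uv.
move=> /(congr1 sval) /= eq_uv.
have -> : v = u ++ nseq (size v - size u) false.
  by apply: pad_eq_cat_nseq => // n; rewrite eq_uv.
by rewrite size_cat size_nseq iterD -inK_cat_nseq.
Qed.

End AppendZeros.

Section Kappa.

Variables (G : Type) (mul : G -> G -> G) (alpha alphainv : G -> G).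
Hypotheses (alphaM : {morph alpha : x y / mul x y})
           (alphaK : cancel alpha alphainv) (alphainvK : cancel alphainv alpha).

Let omega := fun g _ : G => alpha g.

Lemma kappa_inK (f : Q2 -> G) : inK omega (kappa alphainv f).
Proof. by move=> u; rewrite /omega /kappa size_rcons padQ2_rcons0 /= alphainvK. Qed.

Lemma kappaM (f g : Q2 -> G) :
  kappa alphainv (fun x => mul (f x) (g x))
  = (fun u => mul (kappa alphainv f u) (kappa alphainv g u)).
Proof.
apply: functional_extensionality => u.
by rewrite /kappa iter_morph2 //; apply: can_morph2 alphaM _ _.
Qed.

Lemma kappa_inj : injective (kappa alphainv).
Proof.
move=> f g eq_fg; apply: functional_extensionality => x.
have /= := congr1 (fun h => h (Q2_repr x)) eq_fg.
by rewrite /kappa Q2_reprK => /(can_inj (iter_can alphainvK _)).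
Qed.

Definition kappa_inv (a : seq bool -> G) (x : Q2) : G :=
  iter (size (Q2_repr x)) alpha (a (Q2_repr x)).

Lemma kappa_invK (a : seq bool -> G) : inK omega a -> kappa alphainv (kappa_inv a) = a.
Proof.
move=> aK; apply: functional_extensionality => u.
rewrite /kappa /kappa_inv (inK_padQ2_invariant aK (Q2_reprK _)).
exact: iter_can alphaK _ _.
Qed.

End Kappa.

Theorem mainTheorem6 (G : Type) (mul : G -> G -> G) (one : G) (inv : G -> G)
  (alpha alphainv : G -> G) :
  is_group mul one inv ->
  is_automorphism mul alpha alphainv ->
  let omega := fun g h : G => alpha g in
  [/\ (forall f : Q2 -> G, inK omega (kappa alphainv f)),
      (forall f g : Q2 -> G,
          kappa alphainv (fun x => mul (f x) (g x))
          = (fun u => mul (kappa alphainv f u) (kappa alphainv g u))),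
      injective (kappa alphainv)
    & (forall a : seq bool -> G, inK omega a -> exists f : Q2 -> G, kappa alphainv f = a)].
Proof.
move=> _ [alphaM alphaK alphainvK] omega; split.
- exact: kappa_inK.
- exact: kappaM alphaM alphaK alphainvK.
- exact: kappa_inj.
- by move=> a aK; exists (kappa_inv alpha a); apply: kappa_invK.
Qed.
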